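(* Let $0<p<1-1/e^2$ be constant and $b=\frac1{1-p}$, so that $\log b<2$. Let $c=\frac12\left(1-\frac{\log b}{2}\right)$ and $\tilde c=\min\left(\frac12\left(\frac1{\log b}-\frac12\right),\frac12\right)$. Let $(n_j)_{j\ge1}$ be a strictly increasing sequence of positive integers and $j_0$ an integer such that $j$ divides $n_j$ for all $j\ge j_0$ and $\gamma(n_j)=j+o(1)$ as $j\to\infty$, where $\gamma(n)=2\log_b n-2\log_b\log_b n-2\log_b 2$. Write $n=n_j$, $k=k_j=n_j/j$, and for $\rho\in[0,1]$ and $2\le i\le j$ let \[T_i=T_i(\rho)=\frac{e^{\rho i}\,b^{\binom i2}\,k^2\,(j!)^2}{n^i\, i!\,((j-i)!)^2}.\] Then, if $j$ is large enough, for all $\rho\in[0,c]$ and all $3\le i\le j$, \[T_i\le n^{-\tilde c}.\]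
   Context: Here $\log$ denotes the natural logarithm. In the paper, $\rho=v/n$ is the proportion of vertices lying in overlap blocks (intersections of size at least $2$ between a part of one $k$-equipartition and a part of another), and the hypothesis $\rho\le c$ is the condition defining the ''typical overlap'' range. *)

From Stdlib Require Import Reals Lra Lia.
From Coquelicot Require Import Coquelicot.
Open Scope R_scope.

Definition logb (b x : R) : R := ln x / ln b.

Definition gamma_b (b : R) (n : nat) : R :=
  2 * logb b (INR n) - 2 * logb b (logb b (INR n)) - 2 * logb b 2.

Definition binom2 (i : nat) : nat := Nat.div (i * (i - 1)) 2.

Definition T_i (b : R) (n j : nat) (rho : R) (i : nat) : R :=
  let k := INR n / INR j in
  exp (rho * INR i) * b ^ (binom2 i) * k ^ 2 * (INR (Stdlib.Arith.Factorial.fact j)) ^ 2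
  / ((INR n) ^ i * INR (Stdlib.Arith.Factorial.fact i) * (INR (Stdlib.Arith.Factorial.fact (j - i))) ^ 2).

From Stdlib Require Import Reals Lra Lia Psatz Factorial.
From Coquelicot Require Import Coquelicot.
Open Scope R_scope.

(* Write L = ln b, N = ln n and log T_i = logT L N j rho i.  Since gamma(n) = j + o(1),
   N = jL/2 + ln (2N/L) + o(1).  The increment log T_(i+1) - log T_i =
   rho + iL - N - ln (i+1) + 2 ln (j-i) is negative while 4i <= j and positive once
   4i >= 3j, so log T_i is bounded by its values at i = 3 and i = j, and in the middle range
   the crude bound ln (j!/(j-i)!) <= i ln j already gives log T_i <= -N/2, as it does at i = 3.
   At i = j, Stirling's upper bound ln j! <= 1 + (j+1) ln j - j gives
   L log T_j <= -(1 - L/2) N / 2, and ct is exactly the constant combining both bounds. *)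

Lemma ln_le_sub1 y : 0 < y -> ln y <= y - 1.
Proof. intros Hy. pose proof (exp_ineq1_le (ln y)). rewrite exp_ln in H; lra. Qed.

Lemma one_sub_inv_le_ln y : 0 < y -> 1 - / y <= ln y.
Proof.
  intros Hy. pose proof (ln_le_sub1 (/ y) (Rinv_0_lt_compat _ Hy)).
  rewrite ln_Rinv in H; lra.
Qed.

Lemma ln_le_2sqrt x : 0 < x -> ln x <= 2 * sqrt x.
Proof.
  intros Hx. pose proof (sqrt_lt_R0 _ Hx) as Hs.
  rewrite <- (sqrt_sqrt x) at 1 by lra.
  rewrite ln_mult by lra. pose proof (ln_le_sub1 _ Hs). lra.
Qed.

Lemma ln_add_le_linear_eventually a C : 0 < a ->
  exists X, forall x, X <= x -> ln x + C <= a * x.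
Proof.
  intros Ha. set (s := (2 + Rabs C) / a + 1).
  assert (Has : a * s = 2 + Rabs C + a) by (unfold s; field; lra).
  assert (Hs : 1 <= s).
  { assert (0 <= (2 + Rabs C) / a) by (apply Rdiv_le_0_compat; pose proof (Rabs_pos C); lra).
    unfold s; lra. }
  exists (s * s). intros x Hx.
  assert (Hx0 : 0 < x) by nra.
  pose proof (ln_le_2sqrt x Hx0). pose proof (Rle_abs C). pose proof (Rabs_pos C).
  assert (Hsq : s <= sqrt x).
  { rewrite <- (sqrt_square s) by lra. apply sqrt_le_1_alt. lra. }
  rewrite <- (sqrt_sqrt x) at 2 by lra.
  (* [a * sqrt x >= 2 + |C|] absorbs both [ln x <= 2 sqrt x] and [C <= |C| sqrt x] *)
  assert (a * sqrt x >= 2 + Rabs C) by nra.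
  nra.
Qed.

Lemma eventually_ge_INR (X : R) : eventually (fun j => X <= INR j).
Proof.
  destruct (INR_unbounded X) as [J HJ]. exists J. intros j Hj.
  apply le_INR in Hj. lra.
Qed.

Lemma eventually_ln_add_le_linear a C : 0 < a ->
  eventually (fun j => ln (INR j) + C <= a * INR j).
Proof.
  intros Ha. destruct (ln_add_le_linear_eventually a C Ha) as [X HX].
  apply (filter_imp (fun j => X <= INR j)); [intros j; apply HX | apply eventually_ge_INR].
Qed.

Lemma ln_INR_ge0 m : (1 <= m)%nat -> 0 <= ln (INR m).
Proof. intros Hm. rewrite <- ln_1. apply ln_le; [lra | apply (le_INR 1 m Hm)]. Qed.

Lemma ln_INR_le m m' : (1 <= m)%nat -> (m <= m')%nat -> ln (INR m) <= ln (INR m').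
Proof. intros Hm Hmm'. apply ln_le; [apply lt_0_INR; lia | apply le_INR; lia]. Qed.

Lemma le_INR_mul a b m n : (a * m <= b * n)%nat -> INR a * INR m <= INR b * INR n.
Proof. intros H. rewrite <- !mult_INR. apply le_INR, H. Qed.

Definition ln_fact (m : nat) : R := ln (INR (fact m)).

Lemma INR_fact_gt0 m : 0 < INR (fact m).
Proof. apply lt_0_INR, lt_O_fact. Qed.

Lemma ln_fact_S m : ln_fact (S m) = ln_fact m + ln (INR (S m)).
Proof.
  unfold ln_fact. rewrite fact_simpl, mult_INR, ln_mult; [ring | apply lt_0_INR; lia | apply INR_fact_gt0].
Qed.

Lemma ln_fact_ge0 m : 0 <= ln_fact m.
Proof. apply ln_INR_ge0, lt_O_fact. Qed.

Lemma ln_fact_add_sub_le m i : ln_fact (m + i) - ln_fact m <= INR i * ln (INR (m + i)).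
Proof.
  induction i as [|i IH].
  - rewrite Nat.add_0_r. simpl. lra.
  - rewrite Nat.add_succ_r, ln_fact_S, (S_INR i).
    assert (INR i * ln (INR (m + i)) <= INR i * ln (INR (S (m + i)))).
    { destruct i; [simpl; lra |].
      apply Rmult_le_compat_l; [apply pos_INR | apply ln_INR_le; lia]. }
    lra.
Qed.

Lemma ln_fact_le m : (1 <= m)%nat -> ln_fact m <= 1 + (INR m + 1) * ln (INR m) - INR m.
Proof.
  induction m as [|m IH]; intros Hm; [lia |].
  destruct m.
  - unfold ln_fact. simpl. rewrite ln_1. lra.
  - specialize (IH ltac:(lia)). rewrite ln_fact_S.
    set (x := INR (S m)) in *.
    assert (Hx : 1 <= x) by (apply (le_INR 1); lia).
    replace (INR (S (S m))) with (x + 1) by (rewrite (S_INR (S m)); reflexivity).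
    (* the induction step is [ln (1 + 1/x) >= 1/(x+1)] *)
    assert (Hstep : 1 <= (x + 1) * (ln (x + 1) - ln x)).
    { pose proof (one_sub_inv_le_ln ((x + 1) / x) ltac:(apply Rdiv_lt_0_compat; lra)) as H.
      rewrite ln_div in H by lra.
      replace (1 - / ((x + 1) / x)) with (/ (x + 1)) in H by (field; lra).
      apply (Rmult_le_compat_l (x + 1)) in H; [| lra].
      rewrite Rinv_r in H; lra. }
    nra.
Qed.

Lemma binom2_S i : binom2 (S i) = (binom2 i + i)%nat.
Proof.
  unfold binom2. replace (S i * (S i - 1))%nat with (i * (i - 1) + i * 2)%nat.
  - rewrite Nat.div_add; lia.
  - destruct i; simpl; lia.
Qed.

Lemma binom2_INR i : 2 * INR (binom2 i) = INR i * (INR i - 1).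
Proof.
  induction i as [|i IH]; [simpl; lra |].
  rewrite binom2_S, plus_INR, S_INR. lra.
Qed.

Definition logT (L N : R) (j : nat) (rho : R) (i : nat) : R :=
  rho * INR i + INR (binom2 i) * L + 2 * (N - ln (INR j)) + 2 * ln_fact j
  - (INR i * N + ln_fact i + 2 * ln_fact (j - i)).

Lemma T_i_exp b n j rho i : 0 < b -> (0 < n)%nat -> (0 < j)%nat ->
  T_i b n j rho i = exp (logT (ln b) (ln (INR n)) j rho i).
Proof.
  intros Hb Hn Hj.
  assert (Hn' : 0 < INR n) by (apply lt_0_INR; lia).
  assert (Hj' : 0 < INR j) by (apply lt_0_INR; lia).
  pose proof (INR_fact_gt0 j). pose proof (INR_fact_gt0 i). pose proof (INR_fact_gt0 (j - i)).
  assert (Hk : 0 < INR n / INR j) by (apply Rdiv_lt_0_compat; lra).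
  assert (Ht : 0 < T_i b n j rho i).
  { unfold T_i.
    repeat first [apply exp_pos | apply pow_lt | apply Rdiv_lt_0_compat | apply Rmult_lt_0_compat];
      auto. }
  rewrite <- (exp_ln _ Ht). f_equal. unfold T_i, logT, ln_fact.
  rewrite ln_div, !ln_mult, !ln_pow, ln_exp, ln_div by auto using exp_pos, pow_lt, Rmult_lt_0_compat.
  simpl INR. ring.
Qed.

Lemma logT_succ L N j rho i : (S i <= j)%nat ->
  logT L N j rho (S i) - logT L N j rho i =
  rho + INR i * L - N - ln (INR (S i)) + 2 * ln (INR (j - i)).
Proof.
  intros Hij. unfold logT.
  replace (j - i)%nat with (S (j - S i)) by lia.
  rewrite binom2_S, plus_INR, !ln_fact_S, (S_INR i). ring.
Qed.

Lemma le_of_decreasing_on (f : nat -> R) a b : (a <= b)%nat ->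
  (forall i, (a <= i < b)%nat -> f (S i) <= f i) -> f b <= f a.
Proof.
  induction b as [|b IH]; intros Hab Hdec.
  - replace a with 0%nat by lia. lra.
  - destruct (Nat.eq_dec a (S b)) as [->|Ha]; [lra |].
    pose proof (Hdec b ltac:(lia)). pose proof (IH ltac:(lia) ltac:(intros; apply Hdec; lia)). lra.
Qed.

Section LogTBound.

(* [M] stands for ln (2N/L), so that [Hgap] is [gamma(n) = j + o(1)] multiplied by L/2. *)
Variables (L N M rho : R) (j : nat).
Hypotheses
  (HL : 0 < L < 2)
  (Hj : 80 <= INR j)
  (Hgap : Rabs (N - M - INR j * L / 2) <= (1 - L / 2) / 8)
  (HM : 1 <= M)
  (HMN : 4 * M + 6 <= (1 - L / 2) / 4 * N)
  (Hlnj : ln (INR j) <= M)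
  (Hjlin : 32 * ln (INR j) + 32 <= L * INR j)
  (Hrho : 0 <= rho <= / 2 * (1 - L / 2)).

Lemma gap_bounds : - ((1 - L / 2) / 8) <= N - M - INR j * L / 2 <= (1 - L / 2) / 8.
Proof. revert Hgap. unfold Rabs. destruct Rcase_abs; lra. Qed.

Lemma j_ge_80 : (80 <= j)%nat.
Proof. apply INR_le. replace (INR 80) with 80 by (simpl; lra). exact Hj. Qed.

Lemma ln_j_ge0 : 0 <= ln (INR j).
Proof. apply ln_INR_ge0. pose proof j_ge_80. lia. Qed.

Lemma N_ge0 : 0 <= N.
Proof. pose proof gap_bounds. pose proof ln_j_ge0. nra. Qed.

Lemma M_le_N : 4 * M + 6 <= N / 4.
Proof. pose proof N_ge0. assert (0 <= L * N) by nra. lra. Qed.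

Lemma logT_3_le : logT L N j rho 3 <= - N / 2.
Proof.
  pose proof gap_bounds. pose proof j_ge_80.
  pose proof (ln_fact_add_sub_le (j - 3) 3) as Hfact.
  replace (j - 3 + 3)%nat with j in Hfact by lia.
  pose proof (ln_fact_ge0 3). pose proof ln_j_ge0.
  unfold logT.
  replace (INR (binom2 3)) with 3 by (compute; lra).
  replace (INR 3) with 3 in * by (simpl; lra).
  lra.
Qed.

Lemma logT_le_3 i : (3 <= i)%nat -> (4 * i <= j)%nat -> logT L N j rho i <= logT L N j rho 3.
Proof.
  intros Hi3 Hij. pose proof gap_bounds. pose proof ln_j_ge0.
  apply le_of_decreasing_on; [exact Hi3 |]. intros k Hk.
  pose proof (logT_succ L N j rho k ltac:(lia)).
  pose proof (ln_INR_ge0 (S k) ltac:(lia)).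
  pose proof (ln_INR_le (j - k) j ltac:(lia) ltac:(lia)).
  pose proof (le_INR_mul 4 1 k j ltac:(lia)) as H4k. simpl INR in H4k.
  assert (INR k * L <= INR j / 4 * L) by (apply Rmult_le_compat_r; lra).
  lra.
Qed.

Lemma logT_mid_le i : (j <= 4 * i)%nat -> (4 * i <= 3 * j)%nat -> logT L N j rho i <= - N / 2.
Proof.
  intros H1 H2. pose proof gap_bounds. pose proof ln_j_ge0.
  pose proof (ln_fact_add_sub_le (j - i) i) as Hfact.
  replace (j - i + i)%nat with j in Hfact by lia.
  pose proof (ln_fact_ge0 i). pose proof (binom2_INR i).
  pose proof (le_INR_mul 1 4 j i ltac:(lia)) as Hlo. pose proof (le_INR_mul 4 3 i j H2) as Hhi.
  simpl INR in Hlo, Hhi.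
  unfold logT. set (x := INR i) in *.
  (* after the bound on the factorials, [logT] is at most [x] times the bracket below *)
  assert (Hbr : rho + (x - 1) * L / 2 + 2 * ln (INR j) - N <= - N / 8).
  { assert (x * L <= 3 * INR j / 4 * L) by (apply Rmult_le_compat_r; lra). lra. }
  assert (x * (rho + (x - 1) * L / 2 + 2 * ln (INR j) - N) <= x * (- N / 8))
    by (apply Rmult_le_compat_l; lra).
  assert (x * N >= 20 * N) by nra.
  replace (INR (binom2 i) * L) with (x * (x - 1) / 2 * L) by (rewrite <- H4; field).
  nra.
Qed.

Lemma logT_le_j i : (3 * j <= 4 * i)%nat -> (i <= j)%nat -> logT L N j rho i <= logT L N j rho j.
Proof.
  intros H1 H2. pose proof gap_bounds. pose proof ln_j_ge0.
  enough (- logT L N j rho j <= - logT L N j rho i) by lra.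
  apply (le_of_decreasing_on (fun k => - logT L N j rho k)); [exact H2 |]. intros k Hk.
  pose proof (logT_succ L N j rho k ltac:(lia)).
  pose proof (ln_INR_ge0 (j - k) ltac:(lia)). pose proof M_le_N.
  pose proof (ln_INR_le (S k) j ltac:(lia) ltac:(lia)).
  assert (3 * INR j / 4 * L <= INR k * L).
  { apply Rmult_le_compat_r; [lra |].
    pose proof (le_INR_mul 3 4 j k ltac:(lia)). simpl INR in *. lra. }
  lra.
Qed.

Lemma logT_j_le : L * logT L N j rho j <= - (/ 2 * (1 - L / 2)) * N.
Proof.
  pose proof gap_bounds. pose proof ln_j_ge0.
  pose proof (ln_fact_le j ltac:(pose proof j_ge_80; lia)). pose proof (binom2_INR j).
  assert (Hlog : logT L N j rho j = rho * INR j + INR j * (INR j - 1) / 2 * L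
                   + 2 * (N - ln (INR j)) + ln_fact j - INR j * N).
  { unfold logT. rewrite Nat.sub_diag. unfold ln_fact at 3. simpl. rewrite ln_1.
    replace (INR (binom2 j)) with (INR j * (INR j - 1) / 2) by lra. ring. }
  set (x := INR j) in *.
  assert (Hbr : rho + (x - 1) * L / 2 + ln x - 1 - N <= 13 * (1 - L / 2) / 8 - 2) by lra.
  assert (x * (rho + (x - 1) * L / 2 + ln x - 1 - N) <= x * (13 * (1 - L / 2) / 8 - 2))
    by (apply Rmult_le_compat_l; lra).
  assert (Hup : logT L N j rho j <= x * (13 * (1 - L / 2) / 8 - 2) + 2 * N + 1) by nra.
  apply (Rmult_le_compat_l L) in Hup; [| lra].
  nra.
Qed.

Lemma logT_le i : (3 <= i)%nat -> (i <= j)%nat ->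
  logT L N j rho i <= - Rmin (/ 2 * (/ L - / 2)) (/ 2) * N.
Proof.
  intros Hi3 Hij. pose proof N_ge0.
  set (ct := Rmin (/ 2 * (/ L - / 2)) (/ 2)).
  assert (Hct_half : ct * N <= / 2 * N) by (apply Rmult_le_compat_r; [lra | apply Rmin_r]).
  assert (Hct_L : ct * L <= / 2 * (1 - L / 2)).
  { replace (/ 2 * (1 - L / 2)) with (/ 2 * (/ L - / 2) * L) by (field; lra).
    apply Rmult_le_compat_r; [lra | apply Rmin_l]. }
  destruct (Nat.le_gt_cases (4 * i) j) as [Hsmall | Hbig].
  - pose proof (logT_le_3 i Hi3 Hsmall). pose proof logT_3_le. lra.
  - destruct (Nat.le_gt_cases (4 * i) (3 * j)) as [Hmid | Hlarge].
    + pose proof (logT_mid_le i ltac:(lia) Hmid). lra.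
    + pose proof (logT_le_j i ltac:(lia) Hij). pose proof logT_j_le.
      apply (Rmult_le_reg_l L); [lra |]. nra.
Qed.

End LogTBound.

Lemma id_le_strictly_increasing (u : nat -> nat) :
  (forall j, (1 <= j)%nat -> (0 < u j)%nat) ->
  (forall j, (1 <= j)%nat -> (u j < u (S j))%nat) ->
  forall j, (1 <= j)%nat -> (j <= u j)%nat.
Proof.
  intros Hpos Hincr j Hj. induction j as [|j IH]; [lia |].
  destruct j; [specialize (Hpos 1%nat Hj); lia |].
  specialize (IH ltac:(lia)). specialize (Hincr (S j) ltac:(lia)). lia.
Qed.

Lemma gamma_b_sub_eq b n (j : nat) : 0 < ln b -> (2 <= n)%nat ->
  gamma_b b n - INR j =
  2 / ln b * (ln (INR n) - ln (2 * ln (INR n) / ln b) - INR j * ln b / 2).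
Proof.
  intros Hb Hn.
  assert (HN : 0 < ln (INR n)).
  { rewrite <- ln_1. apply ln_increasing; [lra |]. apply (lt_INR 1); lia. }
  unfold gamma_b, logb.
  replace (2 * ln (INR n) / ln b) with (2 * (ln (INR n) / ln b)) by (field; lra).
  rewrite ln_mult by (try apply Rdiv_lt_0_compat; lra).
  field. lra.
Qed.

Lemma ln_2N_div_L_bounds L : 0 < L < 2 ->
  exists X, forall N, X <= N ->
    1 <= ln (2 * N / L) /\ 4 * ln (2 * N / L) + 6 <= (1 - L / 2) / 4 * N.
Proof.
  intros HL.
  destruct (ln_add_le_linear_eventually ((1 - L / 2) * L / 32) (3 / 2)) as [X HX]; [nra |].
  exists (Rmax (3 * L / 2) (L * X / 2)). intros N HN.
  pose proof (Rmax_l (3 * L / 2) (L * X / 2)). pose proof (Rmax_r (3 * L / 2) (L * X / 2)).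
  split.
  - rewrite <- ln_exp at 1. apply ln_le; [apply exp_pos |].
    pose proof exp_le_3. apply (Rmult_le_reg_l L); [lra |].
    replace (L * (2 * N / L)) with (2 * N) by (field; lra). nra.
  - assert (X <= 2 * N / L).
    { apply (Rmult_le_reg_l L); [lra |]. replace (L * (2 * N / L)) with (2 * N) by (field; lra). lra. }
    specialize (HX _ H1).
    replace ((1 - L / 2) * L / 32 * (2 * N / L)) with ((1 - L / 2) / 16 * N) in HX by (field; lra).
    lra.
Qed.

Lemma eventually_regime b (u : nat -> nat) :
  0 < ln b < 2 ->
  (forall j, (1 <= j)%nat -> (0 < u j)%nat) ->
  (forall j, (1 <= j)%nat -> (u j < u (S j))%nat) ->
  is_lim_seq (fun j => gamma_b b (u j) - INR j) 0 ->
  eventually (fun j =>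
    let L := ln b in let N := ln (INR (u j)) in let M := ln (2 * N / L) in
    80 <= INR j /\ Rabs (N - M - INR j * L / 2) <= (1 - L / 2) / 8 /\ 1 <= M /\
    4 * M + 6 <= (1 - L / 2) / 4 * N /\ ln (INR j) <= M /\
    32 * ln (INR j) + 32 <= L * INR j).
Proof.
  intros HL Hpos Hincr Hlim. set (L := ln b) in *.
  destruct (ln_2N_div_L_bounds L HL) as [X HX].
  assert (Heps : 0 < (1 - L / 2) / (4 * L)) by (apply Rdiv_lt_0_compat; lra).
  assert (HL32 : 0 < L / 32) by lra.
  apply is_lim_seq_spec in Hlim. specialize (Hlim (mkposreal _ Heps)).
  pose proof (filter_and _ _ (eventually_ge_INR (Rmax 80 (exp X)))
               (filter_and _ _ (eventually_ln_add_le_linear (L / 32) 1 HL32) Hlim)) as Hev.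
  eapply filter_imp; [| exact Hev]. clear Hev Hlim.
  intros j (Hj & Hjlin & Hgamma). simpl in Hgamma. cbv zeta.
  pose proof (Rmax_l 80 (exp X)). pose proof (Rmax_r 80 (exp X)).
  assert (Hj80 : (80 <= j)%nat) by (apply INR_le; simpl; lra).
  pose proof (id_le_strictly_increasing u Hpos Hincr j ltac:(lia)) as Hju.
  assert (HlnN : ln (INR j) <= ln (INR (u j))) by (apply ln_INR_le; lia).
  assert (HXN : X <= ln (INR j)) by (rewrite <- (ln_exp X); apply ln_le; [apply exp_pos | lra]).
  destruct (HX (ln (INR (u j))) ltac:(lra)) as [HM HMN].
  assert (H2L : 0 < 2 / L) by (apply Rdiv_lt_0_compat; lra).
  rewrite Rminus_0_r, gamma_b_sub_eq in Hgamma by (fold L; lra || lia). fold L in Hgamma.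
  rewrite Rabs_mult, (Rabs_pos_eq (2 / L)) in Hgamma by lra.
  set (N := ln (INR (u j))) in *. set (M := ln (2 * N / L)) in *.
  assert (Hgap : Rabs (N - M - INR j * L / 2) <= (1 - L / 2) / 8).
  { apply (Rmult_lt_compat_l (L / 2)) in Hgamma; [| lra].
    replace (L / 2 * (2 / L * Rabs (N - M - INR j * L / 2))) with (Rabs (N - M - INR j * L / 2))
      in Hgamma by (field; lra).
    replace (L / 2 * ((1 - L / 2) / (4 * L))) with ((1 - L / 2) / 8) in Hgamma by (field; lra).
    lra. }
  assert (Hlnj : ln (INR j) <= M).
  { apply ln_le; [lra |]. apply (Rmult_le_reg_l L); [lra |].
    replace (L * (2 * N / L)) with (2 * N) by (field; lra).
    revert Hgap. unfold Rabs. destruct Rcase_abs; lra. }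
  repeat split; lra.
Qed.

Lemma exp_le x y : x <= y -> exp x <= exp y.
Proof. intros [Hlt | ->]; [left; apply exp_increasing, Hlt | right; reflexivity]. Qed.

Lemma ln_inv_one_sub_bounds p : 0 < p -> p < 1 - 1 / exp 2 -> 0 < ln (1 / (1 - p)) < 2.
Proof.
  intros Hp Hp2.
  assert (He : 0 < 1 / exp 2) by (apply Rdiv_lt_0_compat; [lra | apply exp_pos]).
  assert (Hlo : ln (1 / exp 2) < ln (1 - p)) by (apply ln_increasing; lra).
  assert (Hhi : ln (1 - p) < ln 1) by (apply ln_increasing; lra).
  rewrite Rdiv_1_l, ln_Rinv, ln_exp in Hlo by apply exp_pos.
  rewrite ln_1 in Hhi.
  rewrite Rdiv_1_l, ln_Rinv by lra. lra.
Qed.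

Theorem lemma6 (p : R) (nseq : nat -> nat) (j0 : nat) :
  0 < p -> p < 1 - 1 / exp 2 ->
  (forall j : nat, (1 <= j)%nat -> (0 < nseq j)%nat) ->
  (forall j : nat, (1 <= j)%nat -> (nseq j < nseq (S j))%nat) ->
  (forall j : nat, (1 <= j)%nat -> (j0 <= j)%nat -> Nat.divide j (nseq j)) ->
  is_lim_seq (fun j : nat => gamma_b (1 / (1 - p)) (nseq j) - INR j) 0 ->
  let b := 1 / (1 - p) in
  let c := / 2 * (1 - ln b / 2) in
  let ct := Rmin (/ 2 * (/ ln b - / 2)) (/ 2) in
  exists J : nat, forall j : nat, (J <= j)%nat ->
    forall rho : R, 0 <= rho <= c ->
    forall i : nat, (3 <= i)%nat -> (i <= j)%nat ->
      T_i b (nseq j) j rho i <= Rpower (INR (nseq j)) (- ct).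
Proof.
  (* [k = n_j / j] enters [T_i] only as a real number *)
  intros Hp Hp2 Hpos Hincr _ Hlim b c ct.
  pose proof (ln_inv_one_sub_bounds p Hp Hp2) as HL.
  assert (Hb : 0 < b).
  { pose proof (exp_pos 2). assert (0 < 1 / exp 2) by (apply Rdiv_lt_0_compat; lra).
    apply Rdiv_lt_0_compat; lra. }
  destruct (eventually_regime b nseq HL Hpos Hincr Hlim) as [J HJ].
  exists J. intros j Hj rho Hrho i Hi3 Hij.
  destruct (HJ j Hj) as (H80 & Hgap & HM & HMN & Hlnj & Hjlin).
  assert (Hj1 : (1 <= j)%nat) by lia.
  rewrite T_i_exp by first [exact Hb | apply Hpos; lia | lia].
  apply exp_le, (logT_le (ln b) _ (ln (2 * ln (INR (nseq j)) / ln b))); auto.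
Qed.
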